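(* For every integer $k > 1$, $\lfloor \log_2 (k-1) \rfloor \leq \operatorname{VCdim}(\mathcal{H}^k) \leq k$.
   Context: For $\sigma \in \{0,1\}^k$, let $h_\sigma$ be the classifier on binary strings with $h_\sigma(s) = 1$ iff $\sigma$ is a subsequence of $s$ (there exist indices $i_1 < \dots < i_k$ with $s_{i_j} = \sigma_j$), and $0$ otherwise. $\mathcal{H}^k = \{h_\sigma : \sigma \in \{0,1\}^k\}$, viewed as a hypothesis class on the set of all finite binary strings. A set $B$ of strings is shattered by $\mathcal{H}^k$ if for every $B' \subseteq B$ there is $h \in \mathcal{H}^k$ with $B \cap h^{-1}(1) = B'$; $\operatorname{VCdim}(\mathcal{H}^k)$ is the largest size of a shattered set. *)

From mathcomp Require Import all_boot.
Set Implicit Arguments. Unset Strict Implicit. Unset Printing Implicit Defensive.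

(* h_sigma(s) = 1 iff sigma is a (not necessarily contiguous) subsequence of s;
   mathcomp's [subseq] is exactly this notion. *)
Definition h (k : nat) (sigma : k.-tuple bool) (s : seq bool) : bool :=
  subseq sigma s.

Definition shattered (k : nat) (B : seq (seq bool)) : Prop :=
  uniq B /\
  forall B' : seq (seq bool), {subset B' <= B} ->
    exists sigma : k.-tuple bool,
      forall s, s \in B -> h sigma s = (s \in B').

Definition VCdim_ge (k d : nat) : Prop :=
  exists B, shattered k B /\ d <= size B.

Definition VCdim_le (k d : nat) : Prop :=
  forall B, shattered k B -> size B <= d.

From mathcomp Require Import all_boot.
From mathcomp Require Import zify.

Set Implicit Arguments.
Unset Strict Implicit.
Unset Printing Implicit Defensive.

(* Upper bound: a shattered set of size n needs 2^n hypotheses, and H^k has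
   at most 2^k of them.
   Lower bound: use only the labels 1^a 0^(k-a) with a < k.  A string contains
   1^a 0^(k-a) iff at least k-a zeros follow its a-th one, so any column
   c : {0..k-1} -> bool is realised by a string with exactly k-a-1+c(a) zeros
   after its a-th one; these counts are nonincreasing in a, hence realisable.
   If 2^d <= k, let the labels run through all of {0,1}^d: the d strings
   realising the d coordinate columns are then shattered. *)

Lemma shattering_card (I : finType) (T : eqType) (f : I -> pred T) (B : seq T) :
    uniq B ->
    (forall B' : seq T, {subset B' <= B} ->
       exists i, forall s, s \in B -> f i s = (s \in B')) ->
  2 ^ size B <= #|I|.
Proof.
move=> uB shB; set n := size B; pose t := in_tuple B.
have tnth_inj : injective (tnth t) by apply/tuple_uniqP.
pose trace i := [set j : 'I_n | f i (tnth t j)].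
have trace_onto : powerset [set: 'I_n] \subset trace @: [set: I].
  apply/subsetP => A _.
  have [|i fiE] := shB (image (tnth t) A).
    by move=> _ /imageP[j _ ->]; rewrite mem_tnth.
  apply/imsetP; exists i; rewrite ?inE //.
  by apply/setP => j; rewrite inE fiE ?mem_tnth ?mem_image.
have := leq_trans (subset_leq_card trace_onto) (leq_imset_card _ _).
by rewrite card_powerset !cardsT card_ord.
Qed.

Lemma VCdim_le_self k : VCdim_le k k.
Proof.
move=> B [uB shB].
have := shattering_card uB shB.
by rewrite card_tuple card_bool leq_exp2l.
Qed.

Lemma subseq_nseq_false b (s : seq bool) :
  subseq (nseq b false) s = (b <= count_mem false s).
Proof.
elim: s b => [|x s IHs] [|b] //=.
by case: x => /=; [rewrite (IHs b.+1) add0n | rewrite IHs add1n ltnS].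
Qed.

Definition blocks (zs : seq nat) : seq bool :=
  flatten [seq nseq z false ++ [:: true] | z <- zs].

Lemma blocks_cons z zs : blocks (z :: zs) = nseq z false ++ true :: blocks zs.
Proof. by rewrite /blocks /= -catA. Qed.

Lemma count_false_blocks zs : count_mem false (blocks zs) = sumn zs.
Proof.
elim: zs => [|z zs IHzs] //=.
by rewrite blocks_cons count_cat count_nseq /= IHzs mul1n add0n.
Qed.

Lemma subseq_ones_zeros_blocks a b zs :
  subseq (nseq a true ++ nseq b false) (blocks zs)
    = (a <= size zs) && (b <= sumn (drop a zs)).
Proof.
elim: zs a => [|z zs IHzs] [|a].
- by rewrite subseq_nseq_false.
- by case: b.
- by rewrite subseq_nseq_false count_false_blocks drop0.
- by rewrite blocks_cons /= -IHzs; elim: z.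
Qed.

Lemma sumn_iota_diff (f : nat -> nat) m n :
    (forall t, f t.+1 <= f t) ->
  sumn [seq f t - f t.+1 | t <- iota m n] + f (m + n) = f m.
Proof.
move=> f_step; elim: n m => [|n IHn] m /=; first by rewrite addn0.
by rewrite -addnA -addSnnS IHn subnK.
Qed.

Section ColumnString.
Variables (k : nat) (c : nat -> bool).

Definition label a : seq bool := nseq a true ++ nseq (k - a) false.

Lemma size_label a : a <= k -> size (label a) == k.
Proof. by rewrite size_cat !size_nseq => /subnKC ->. Qed.

Let zeros_after t := if t < k then k - t.+1 + c t else 0.

Definition column_string : seq bool :=
  blocks [seq zeros_after t - zeros_after t.+1 | t <- iota 0 k].

Lemma subseq_label_column_string a : a < k -> subseq (label a) column_string = c a.
Proof.
move=> lt_ak; have zeros_after_step t : zeros_after t.+1 <= zeros_after t.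
  rewrite /zeros_after; case: (ltnP t.+1 k) => // lt_t1k; rewrite (ltnW lt_t1k).
  by case: (c t); case: (c t.+1) => /=; lia.
have zeros_after_k : zeros_after k = 0 by rewrite /zeros_after ltnn.
have zeros_after_a := sumn_iota_diff a (k - a) zeros_after_step.
rewrite subnKC ?(ltnW lt_ak) // zeros_after_k addn0 in zeros_after_a.
rewrite /label /column_string subseq_ones_zeros_blocks size_map size_iota.
rewrite (ltnW lt_ak) -map_drop drop_iota add0n zeros_after_a /zeros_after lt_ak.
by case: (c a); lia.
Qed.

End ColumnString.

Lemma VCdim_ge_of_exp2_le k d : 2 ^ d <= k -> VCdim_ge k d.
Proof.
move=> le_2d_k; pose F := {ffun 'I_d -> bool}.
pose S i := column_string k (fun a => nth [ffun=> false] (enum F) a i).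
have index_lt_k (f : F) : index f (enum F) < k.
  have card_F : #|F| = 2 ^ d by rewrite card_ffun card_bool card_ord.
  by rewrite (leq_trans _ le_2d_k) // -card_F cardE index_mem mem_enum.
have S_detects (f : F) i : subseq (label k (index f (enum F))) (S i) = f i.
  by rewrite subseq_label_column_string // nth_index ?mem_enum.
exists [seq S i | i <- enum 'I_d]; split; last by rewrite size_map size_enum_ord.
split.
  rewrite map_inj_uniq ?enum_uniq // => i j eq_S.
  by have := S_detects [ffun t => i == t] i; rewrite eq_S S_detects !ffunE eqxx => /eqP.
move=> B' _; pose f : F := [ffun i => S i \in B'].
exists (Tuple (size_label (ltnW (index_lt_k f)))) => _ /mapP[i _ ->].
by rewrite /h /= S_detects ffunE.
Qed.

Theorem mainTheorem11 (k : nat) (hk : 1 < k) :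
  VCdim_ge k (trunc_log 2 (k - 1)) /\ VCdim_le k k.
Proof.
split; last exact: VCdim_le_self.
apply: VCdim_ge_of_exp2_le.
by rewrite (leq_trans (trunc_logP _ _)) ?leq_subr ?subn_gt0.
Qed.
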